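(* Assume $\Sigma_n$ and $V_n$ are invertible and $\mathcal{D}_n^{\Sigma} := \|\Sigma_n^{-1/2}\widehat{\Sigma}_n\Sigma_n^{-1/2} - I_d\|_{\mathrm{op}} < 1$. Then \[ \max_{1\le j\le d}\left|\frac{\widehat{\beta}_j - \beta_j - n^{-1}\sum_{i=1}^n \psi_{ij}}{\sqrt{(\Sigma_n^{-1}V_n\Sigma_n^{-1})_{jj}}}\right| \le \kappa(\Sigma_n^{-1/2}V_n^{1/2})\frac{\mathcal{D}_n^{\Sigma}}{1 - \mathcal{D}_n^{\Sigma}}\Big\|\frac{1}{n}\sum_{i=1}^n \psi_i\Big\|_{\Sigma_n V^{-1}_n\Sigma_n}, \] where $\psi_i := \Sigma_n^{-1}X_i(Y_i-X_i^\top\beta)$ and $\psi_{ij}$ is its $j$-th coordinate.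
   Context: Let $(X_1,Y_1),\dots,(X_n,Y_n)$ be random elements of $\mathbb{R}^d\times\mathbb{R}$ (not necessarily independent or identically distributed) with finite second moments. Define $\Sigma_n := n^{-1}\sum_{i=1}^n\mathbb{E}[X_iX_i^\top]$, $\Gamma_n := n^{-1}\sum_{i=1}^n\mathbb{E}[X_iY_i]$, $\beta := \Sigma_n^{-1}\Gamma_n$, $\widehat{\Sigma}_n := n^{-1}\sum_{i=1}^n X_iX_i^\top$, $\widehat{\Gamma}_n := n^{-1}\sum_{i=1}^n X_iY_i$, $\widehat\beta := \widehat{\Sigma}_n^{-1}\widehat{\Gamma}_n$, and $V_n := \mathrm{Var}\big(n^{-1}\sum_{i=1}^n X_i(Y_i - X_i^\top\beta)\big)$. For positive definite $A$, $\|x\|_A := \sqrt{x^\top A x}$; $\kappa(A) := \|A^{-1}\|_{\mathrm{op}}\|A\|_{\mathrm{op}}$. *)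

From HB Require Import structures.
From mathcomp Require Import all_boot all_order all_algebra.
From mathcomp Require Import all_classical all_reals all_analysis.
Set Implicit Arguments. Unset Strict Implicit. Unset Printing Implicit Defensive.
Import Order.TTheory GRing.Theory Num.Theory.
Local Open Scope ring_scope.

Section Defs.
Variable R : realType.

Definition vnorm (k : nat) (x : 'cV[R]_k) : R := Num.sqrt (\sum_i x i 0 ^+ 2).

Definition opnorm (m k : nat) (A : 'M[R]_(m, k)) : R :=
  sup [set vnorm (A *m x) | x in [set x : 'cV[R]_k | vnorm x = 1]].

Definition kappa (k : nat) (A : 'M[R]_k) : R := opnorm (invmx A) * opnorm A.

Definition psdmx (k : nat) (B : 'M[R]_k) : Prop :=
  B^T = B /\ forall x : 'cV[R]_k, 0 <= (x^T *m B *m x) 0 0.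

(* the (unique) symmetric PSD square root A^{1/2}; 0 if none exists *)
Definition sqrtmx (k : nat) (A : 'M[R]_k) : 'M[R]_k :=
  match pselect (exists B, psdmx B /\ B *m B = A) with
  | left h => projT1 (cid h)
  | right _ => 0
  end.

Definition wnorm (k : nat) (A : 'M[R]_k) (x : 'cV[R]_k) : R :=
  Num.sqrt ((x^T *m A *m x) 0 0).

Context {dsp : measure_display} {T : measurableType dsp} (P : probability T R).

Definition Ex (f : T -> R) : R := fine ('E_P[f])%E.

Variables (n d : nat) (X : 'I_n -> T -> 'cV[R]_d) (Y : 'I_n -> T -> R).

Definition Sigma_n : 'M[R]_d :=
  \matrix_(k, l) ((n%:R)^-1 * \sum_i Ex (fun w => X i w k 0 * X i w l 0)).
Definition Gamma_n : 'cV[R]_d :=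
  \col_k ((n%:R)^-1 * \sum_i Ex (fun w => X i w k 0 * Y i w)).
Definition beta_n : 'cV[R]_d := invmx Sigma_n *m Gamma_n.

Definition Sigma_hat (w : T) : 'M[R]_d :=
  (n%:R)^-1 *: \sum_i (X i w *m (X i w)^T).
Definition Gamma_hat (w : T) : 'cV[R]_d :=
  (n%:R)^-1 *: \sum_i (Y i w *: X i w).
Definition beta_hat (w : T) : 'cV[R]_d := invmx (Sigma_hat w) *m Gamma_hat w.

Definition Zvec (w : T) : 'cV[R]_d :=
  (n%:R)^-1 *: \sum_i ((Y i w - ((X i w)^T *m beta_n) 0 0) *: X i w).
Definition V_n : 'M[R]_d :=
  \matrix_(k, l) fine (covariance P (fun w => Zvec w k 0) (fun w => Zvec w l 0)).

Definition psi (i : 'I_n) (w : T) : 'cV[R]_d :=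
  invmx Sigma_n *m ((Y i w - ((X i w)^T *m beta_n) 0 0) *: X i w).
Definition psi_bar (w : T) : 'cV[R]_d := (n%:R)^-1 *: \sum_i psi i w.

Definition DSigma (w : T) : R :=
  opnorm (invmx (sqrtmx Sigma_n) *m Sigma_hat w *m invmx (sqrtmx Sigma_n) - 1%:M).

End Defs.

(* The argument is entirely deterministic once two facts about the model are
   known: the score Z = n^-1 sum_i X_i (Y_i - X_i^T beta) satisfies
   Z = Gamma_hat - Sigma_hat beta, and psi_bar = Sigma^-1 Z.  Writing
   B = Sigma^(1/2), C = V^(1/2), A = B^-1 Sigma_hat B^-1 and D = ||A - I||,
   the standardised error y = B (beta_hat - beta - psi_bar) and g = B psi_bar
   satisfy A (y + g) = g, so |y| <= D / (1 - D) |g| when D < 1.  A duality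
   bound with M = B^-1 C then turns |y| into the studentised coordinate error,
   and |g| into the (Sigma V^-1 Sigma)-norm of psi_bar, at the price of
   kappa(M) = ||M^-1|| ||M||.

   The theorem then
   only has to supply the square roots of Sigma_n and V_n. *)
From HB Require Import structures.
From mathcomp Require Import all_boot all_order all_algebra.
From mathcomp Require Import all_classical all_reals all_analysis.
From mathcomp Require Import ring lra complex measurable_realfun.
Set Implicit Arguments. Unset Strict Implicit. Unset Printing Implicit Defensive.
Import Order.TTheory GRing.Theory Num.Theory.
Local Open Scope ring_scope.

Section DotProduct.
Variable R : realFieldType.

Definition dot k (u v : 'cV[R]_k) : R := (u^T *m v) 0 0.

Lemma dotE k (u v : 'cV[R]_k) : dot u v = \sum_i u i 0 * v i 0.
Proof. by rewrite /dot mxE; apply: eq_bigr => i _; rewrite mxE. Qed.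

Lemma dotC k (u v : 'cV[R]_k) : dot u v = dot v u.
Proof. by rewrite !dotE; apply: eq_bigr => i _; rewrite mulrC. Qed.

Lemma dot_mulmx k l (u : 'cV[R]_k) (A : 'M[R]_(k, l)) v :
  dot u (A *m v) = dot (A^T *m u) v.
Proof. by rewrite /dot trmx_mul trmxK mulmxA. Qed.

Lemma dotDl k (u v w : 'cV[R]_k) : dot (u + v) w = dot u w + dot v w.
Proof. by rewrite /dot linearD mulmxDl mxE. Qed.

Lemma dotZl k a (u w : 'cV[R]_k) : dot (a *: u) w = a * dot u w.
Proof. by rewrite /dot linearZ -scalemxAl mxE. Qed.

Lemma dotDr k (u v w : 'cV[R]_k) : dot w (u + v) = dot w u + dot w v.
Proof. by rewrite !(dotC w) dotDl. Qed.

Lemma dotZr k a (u w : 'cV[R]_k) : dot w (a *: u) = a * dot w u.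
Proof. by rewrite !(dotC w) dotZl. Qed.

Lemma dot_ge0 k (u : 'cV[R]_k) : 0 <= dot u u.
Proof. by rewrite dotE; apply: sumr_ge0 => i _; rewrite -expr2 sqr_ge0. Qed.

Lemma dot_eq0 k (u : 'cV[R]_k) : dot u u = 0 -> u = 0.
Proof.
rewrite dotE => u0; apply/colP => i; rewrite mxE.
have /eqP : u i 0 * u i 0 = 0.
  by apply: (psumr_eq0P _ u0) => // j _; rewrite -expr2 sqr_ge0.
by rewrite -expr2 sqrf_eq0 => /eqP.
Qed.

Lemma dot_delta k (j : 'I_k) (v : 'cV[R]_k) : dot (delta_mx j 0) v = v j 0.
Proof.
rewrite dotE (bigD1 j) //= big1 ?addr0; first by rewrite mxE !eqxx mul1r.
by move=> i /negPf ij; rewrite mxE ij mul0r.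
Qed.

Lemma diag_entry_dot k (X : 'M[R]_k) j :
  X j j = dot (delta_mx j 0) (X *m delta_mx j 0).
Proof. by rewrite dot_delta -colE mxE. Qed.

(* The squared Cauchy-Schwarz inequality, from the nonnegativity of
   |u - t v|^2 at the minimising t = <u,v>/<v,v>. *)
Lemma dot_CauchySchwarz k (u v : 'cV[R]_k) : dot u v ^+ 2 <= dot u u * dot v v.
Proof.
have [vv0|vvn0] := eqVneq (dot v v) 0.
  by rewrite vv0 mulr0 (dot_eq0 vv0) /dot mulmx0 mxE expr0n.
have vv_gt0 : 0 < dot v v by rewrite lt0r vvn0 dot_ge0.
pose t := dot u v / dot v v.
have := dot_ge0 (u - t *: v).
have -> : dot (u - t *: v) (u - t *: v) = dot u u - dot u v ^+ 2 / dot v v.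
  rewrite -scaleN1r -scalerA !(dotDl, dotDr, dotZl, dotZr) (dotC v u) /t.
  by field.
by rewrite subr_ge0 ler_pdivrMr.
Qed.

End DotProduct.

Section EuclideanNorm.
Variable R : realType.

Lemma vnormE k (x : 'cV[R]_k) : vnorm x = Num.sqrt (dot x x).
Proof. by rewrite /vnorm dotE; under eq_bigr do rewrite expr2. Qed.

Lemma vnorm_ge0 k (x : 'cV[R]_k) : 0 <= vnorm x.
Proof. exact: sqrtr_ge0. Qed.

Lemma vnorm_sq k (x : 'cV[R]_k) : vnorm x ^+ 2 = dot x x.
Proof. by rewrite vnormE sqr_sqrtr ?dot_ge0. Qed.

Lemma vnorm0 k : vnorm (0 : 'cV[R]_k) = 0.
Proof. by rewrite vnormE /dot mulmx0 mxE sqrtr0. Qed.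

Lemma vnorm_eq0 k (x : 'cV[R]_k) : (vnorm x == 0) = (x == 0).
Proof.
apply/eqP/eqP => [x0|->]; last exact: vnorm0.
by apply: dot_eq0; rewrite -vnorm_sq x0 expr0n.
Qed.

Lemma vnormZ k a (x : 'cV[R]_k) : vnorm (a *: x) = `|a| * vnorm x.
Proof. by rewrite !vnormE dotZl dotZr mulrA -expr2 sqrtrM ?sqr_ge0 // sqrtr_sqr. Qed.

Lemma vnormN k (x : 'cV[R]_k) : vnorm (- x) = vnorm x.
Proof. by rewrite -scaleN1r vnormZ normrN1 mul1r. Qed.

Lemma vnorm_delta k (j : 'I_k) : vnorm (delta_mx j 0 : 'cV[R]_k) = 1.
Proof. by rewrite vnormE dot_delta mxE !eqxx sqrtr1. Qed.

Lemma dot_le_vnorm k (u v : 'cV[R]_k) : `|dot u v| <= vnorm u * vnorm v.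
Proof.
rewrite !vnormE -sqrtrM ?dot_ge0 // -sqrtr_sqr ler_sqrt ?dot_CauchySchwarz //.
by rewrite mulr_ge0 ?dot_ge0.
Qed.

Lemma vnormD k (u v : 'cV[R]_k) : vnorm (u + v) <= vnorm u + vnorm v.
Proof.
rewrite -ler_sqr ?nnegrE ?addr_ge0 ?vnorm_ge0 // sqrrD !vnorm_sq.
rewrite dotDl !dotDr (dotC v u) mulr2n.
have := dot_le_vnorm u v; have := ler_norm (dot u v); lra.
Qed.

(* Every matrix is a bounded operator (with the Frobenius norm as a bound),
   so the supremum defining [opnorm] is finite. *)
Lemma opnorm_has_ubound m k (A : 'M[R]_(m, k)) :
  has_ubound [set vnorm (A *m x) | x in [set x : 'cV[R]_k | vnorm x = 1]].
Proof.
pose K := Num.sqrt (\sum_i dot (row i A)^T (row i A)^T).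
suff bound x : vnorm (A *m x) <= K * vnorm x.
  by exists K => _ [y y1 <-]; rewrite (le_trans (bound y)) // y1 mulr1.
have sum_ge0 : 0 <= \sum_i dot (row i A)^T (row i A)^T.
  by apply: sumr_ge0 => i _; exact: dot_ge0.
rewrite !vnormE -sqrtrM // ler_sqrt ?mulr_ge0 ?dot_ge0 //.
rewrite dotE mulr_suml; apply: ler_sum => i _.
have -> : (A *m x) i 0 = dot (row i A)^T x.
  by rewrite dotE mxE; apply: eq_bigr => j _; rewrite !mxE.
by rewrite -expr2 dot_CauchySchwarz.
Qed.

Lemma opnorm_ub m k (A : 'M[R]_(m, k)) x : vnorm (A *m x) <= opnorm A * vnorm x.
Proof.
have [->|x0] := eqVneq x 0; first by rewrite mulmx0 !vnorm0 mulr0.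
have nx_gt0 : 0 < vnorm x by rewrite lt0r vnorm_eq0 x0 vnorm_ge0.
pose y := (vnorm x)^-1 *: x.
have y1 : vnorm y = 1 by rewrite vnormZ ger0_norm ?invr_ge0 ?vnorm_ge0 // mulVf ?gt_eqF.
have := ub_le_sup (opnorm_has_ubound A) (ex_intro2 _ _ y y1 erefl).
by rewrite -scalemxAr vnormZ ger0_norm ?invr_ge0 ?vnorm_ge0 // mulrC ler_pdivrMr.
Qed.

(* Also for k = 0, where the supremum is over the empty set, hence 0. *)
Lemma opnorm_ge0 m k (A : 'M[R]_(m, k)) : 0 <= opnorm A.
Proof.
have [[x x1]|no_unit] := pselect (exists x : 'cV[R]_k, vnorm x = 1).
  by have := opnorm_ub A x; rewrite x1 mulr1; exact/le_trans/vnorm_ge0.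
rewrite /opnorm (_ : [set vnorm (A *m x) | x in [set x | vnorm x = 1]] = set0)%classic ?sup0 //.
by apply/seteqP; split => [y [x x1 _]|//]; case: no_unit; exists x.
Qed.

End EuclideanNorm.

Section MatrixFacts.

(* A singular square matrix has a nonzero kernel vector: any nonzero column
   of its cokernel. *)
Lemma singular_kernel (F : fieldType) n (A : 'M[F]_n) :
  A \notin unitmx -> exists2 x : 'cV_n, x != 0 & A *m x = 0.
Proof.
rewrite -row_full_unit -cokermx_eq0 => coker_n0.
have [j Cj] : exists j, col j (cokermx A) != 0.
  apply/existsP; apply: contraNT coker_n0 => /existsPn colC0.
  apply/eqP/matrixP => i j; move/negPn/eqP/colP/(_ i): (colC0 j).
  by rewrite !mxE.
by exists (col j (cokermx A)); rewrite // colE mulmxA mulmx_coker mul0mx.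
Qed.

Lemma invmxM (F : fieldType) n (A B : 'M[F]_n) : A \in unitmx -> B \in unitmx ->
  invmx (A *m B) = invmx B *m invmx A.
Proof.
move=> Au Bu; have AB_inv : (A *m B) *m (invmx B *m invmx A) = 1%:M.
  by rewrite mulmxA mulmxK // mulmxV.
by rewrite -[LHS]mulmx1 -AB_inv mulKmx // unitmx_mul Au Bu.
Qed.

Lemma horner_mx_tr (R : comNzRingType) n (A : 'M[R]_n.+1) p :
  (horner_mx A p)^T = horner_mx A^T p.
Proof.
elim/poly_ind: p => [|p c IH]; first by rewrite !rmorph0 trmx0.
rewrite !rmorphD !rmorphM /= !horner_mx_X !horner_mx_C -!mulmxE raddfD /=.
by rewrite trmx_mul IH tr_scalar_mx (comm_mx_horner _ (comm_mx_refl _)).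
Qed.

Lemma interpolation (F : fieldType) (s : seq F) (g : F -> F) :
  exists q : {poly F}, {in s, forall x, q.[x] = g x}.
Proof.
elim: s => [|a s [q qg]]; first by exists 0.
have [a_s|a_n_s] := boolP (a \in s).
  by exists q => x; rewrite inE => /predU1P[->|]; apply: qg.
pose Pi := \prod_(b <- s) ('X - b%:P).
have Pi_a : Pi.[a] != 0 by rewrite -/(root Pi a) root_prod_XsubC.
exists (q + ((g a - q.[a]) / Pi.[a]) *: Pi) => x; rewrite inE hornerD hornerZ.
case/predU1P => [->|x_s]; first by rewrite divfK // addrC subrK.
have /rootP -> : root Pi x by rewrite root_prod_XsubC.
by rewrite mulr0 addr0 qg.
Qed.

Lemma diag_similar_shift_singular (F : fieldType) n (P : 'M[F]_n)
    (lam : 'rV[F]_n) i : P \in unitmx ->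
  (invmx P *m diag_mx lam *m P - (lam 0 i)%:M) \notin unitmx.
Proof.
move=> Pu; rewrite unitmxE unitfE negbK.
have -> : invmx P *m diag_mx lam *m P - (lam 0 i)%:M
    = invmx P *m (diag_mx lam - (lam 0 i)%:M) *m P.
  by rewrite mulmxBr mulmxBl mul_mx_scalar -scalemxAl mulVmx // scalemx1.
rewrite !det_mulmx -diag_const_mx -linearB /= det_diag (bigD1 i) //= !mxE.
by rewrite subrr !(mul0r, mulr0).
Qed.

End MatrixFacts.

Section PsdSquareRoot.
Variable R : realType.
Local Notation toC := (real_complex R).

Lemma psd_eigenvalue_ge0 n (V : 'M[R]_n) (mu : R) :
  psdmx V -> (V - mu%:M) \notin unitmx -> 0 <= mu.
Proof.
move=> [_ Vpsd] /singular_kernel [x x0 V_mu_x].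
have Vx : V *m x = mu *: x.
  by apply/eqP; rewrite -subr_eq0 -mul_scalar_mx -mulmxBl V_mu_x.
have xx_gt0 : 0 < dot x x by rewrite lt0r dot_ge0 andbT; apply: contra x0 => /eqP/dot_eq0->.
by have := Vpsd x; rewrite -mulmxA Vx -scalemxAr mxE pmulr_lge0.
Qed.

Lemma real_symmetric_diagonalisation n (V : 'M[R]_n) : V^T = V ->
  exists2 P : 'M[R[i]]_n, P \in unitmx & exists mu : 'rV[R]_n,
    map_mx toC V = invmx P *m diag_mx (map_mx toC mu) *m P.
Proof.
move=> VT; pose Vc := map_mx toC V.
have Vc_herm : Vc \is hermsymmx.
  apply: realsym_hermsym; first by rewrite qualifE /= expr0 scale1r map_mx_id // map_trmx VT.
  by apply/mxOverP => i j; rewrite mxE; apply/complex_realP; eexists.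
exists (spectralmx Vc); first exact: spectral_unit.
exists (map_mx (@complex.Re R) (spectral_diag Vc)).
have -> : map_mx toC (map_mx (@complex.Re R) (spectral_diag Vc)) = spectral_diag Vc.
  apply/rowP => i; rewrite !mxE RRe_real //.
  exact: (mxOverP (hermitian_spectral_diag_real Vc_herm)).
exact/orthomx_spectralP/hermitian_normalmx.
Qed.

(* With V = P^-1 diag(mu) P and a polynomial r with r(mu_i) = mu_i^(1/4),
   W := r(V)^2 is symmetric PSD (r(V) is symmetric) and W^2 = P^-1 diag(mu) P. *)
Lemma psd_sqrt_exists n (V : 'M[R]_n.+1) : psdmx V -> exists W, psdmx W /\ W *m W = V.
Proof.
move=> Vpsd; have [VT _] := Vpsd.
have [P Pu [mu V_diag]] := real_symmetric_diagonalisation VT.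
have mu_ge0 i : 0 <= mu 0 i.
  apply: (psd_eigenvalue_ge0 Vpsd); rewrite -(map_unitmx toC) map_mxB map_scalar_mx /=.
  have -> : toC (mu 0 i) = map_mx toC mu 0 i by rewrite mxE.
  by rewrite V_diag diag_similar_shift_singular.
have [r r_root4] := interpolation [seq mu 0 i | i <- enum 'I_n.+1]
  (fun t => Num.sqrt (Num.sqrt t)).
pose Rm := horner_mx V r.
have RmT : Rm^T = Rm by rewrite /Rm horner_mx_tr VT.
exists (Rm *m Rm); split.
  split=> [|x]; first by rewrite trmx_mul RmT.
  have -> : x^T *m (Rm *m Rm) *m x = (Rm *m x)^T *m (Rm *m x).
    by rewrite trmx_mul RmT !mulmxA.
  exact: (dot_ge0 (Rm *m x)).
apply: (@map_mx_inj _ _ toC); rewrite !map_mxM /Rm map_horner_mx V_diag.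
rewrite horner_mx_uconjC // horner_mx_diag.
have conjM (A B : 'M[R[i]]_n.+1) :
    (invmx P *m A *m P) *m (invmx P *m B *m P) = invmx P *m (A *m B) *m P.
  by rewrite !mulmxA mulmxK.
rewrite !conjM !mulmx_diag; congr (_ *m diag_mx _ *m _); apply/rowP => j.
rewrite !mxE horner_map r_root4 ?(map_f, mem_enum) // -!rmorphM; congr (toC _).
by rewrite -!expr2 sqr_sqrtr ?sqrtr_ge0 // sqr_sqrtr.
Qed.

Lemma sqrtmxP k (A : 'M[R]_k) : (exists B, psdmx B /\ B *m B = A) ->
  psdmx (sqrtmx A) /\ sqrtmx A *m sqrtmx A = A.
Proof. by move=> ex; rewrite /sqrtmx; case: pselect => [ex'|//]; exact: projT2 (cid ex'). Qed.

Lemma sqrtmx_none k (A : 'M[R]_k) : ~ (exists B, psdmx B /\ B *m B = A) ->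
  sqrtmx A = 0.
Proof. by move=> no_sqrt; rewrite /sqrtmx; case: pselect. Qed.

(* If [sqrtmx S] can standardise some matrix to within distance < 1 of the
   identity, then S has a PSD square root: otherwise [sqrtmx S] = 0 and the
   standardised matrix is 0, at distance ||-I|| >= 1 from the identity. *)
Lemma standardisable_sqrt_exists k (S M : 'M[R]_k.+1) :
  opnorm (invmx (sqrtmx S) *m M *m invmx (sqrtmx S) - 1%:M) < 1 ->
  exists B, psdmx B /\ B *m B = S.
Proof.
have [//|no_sqrt] := pselect (exists B, psdmx B /\ B *m B = S).
have zero_nonunit : (0 : 'M[R]_k.+1) \notin unitmx by rewrite unitmxE det0 unitr0.
rewrite sqrtmx_none // invmx_out // mul0mx mulmx0 sub0r ltNge.
have := opnorm_ub (- 1%:M : 'M[R]_k.+1) (delta_mx 0 0).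
by rewrite mulNmx mul1mx vnormN vnorm_delta mulr1 => ->.
Qed.

End PsdSquareRoot.

Section PerturbationBounds.
Variable R : realType.

Lemma near_identity_unit k (A : 'M[R]_k) : opnorm (A - 1%:M) < 1 -> A \in unitmx.
Proof.
move=> D_lt1; apply/negPn/negP => /singular_kernel [x x0 Ax0].
have x_eq : x = - ((A - 1%:M) *m x) by rewrite mulmxBl Ax0 mul1mx sub0r opprK.
have nx_gt0 : 0 < vnorm x by rewrite lt0r vnorm_eq0 x0 vnorm_ge0.
have := opnorm_ub (A - 1%:M) x; rewrite -vnormN -x_eq.
by rewrite -{1}[vnorm x]mul1r ler_pM2r // leNgt D_lt1.
Qed.

(* If A (y + g) = g with D := ||A - I|| < 1, then y = (I - A)(y + g) is small:
   |y| <= D (|y| + |g|), i.e. |y| <= D / (1 - D) |g|. *)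
Lemma near_identity_fixed_point k (A : 'M[R]_k) (y g : 'cV[R]_k) :
  opnorm (A - 1%:M) < 1 -> A *m (y + g) = g ->
  vnorm y <= opnorm (A - 1%:M) / (1 - opnorm (A - 1%:M)) * vnorm g.
Proof.
set D := opnorm _ => D_lt1 fixed.
have y_eq : y = - ((A - 1%:M) *m (y + g)) by rewrite mulmxBl fixed mul1mx opprB addrK.
have y_le : vnorm y <= D * (vnorm y + vnorm g).
  rewrite {1}y_eq vnormN (le_trans (opnorm_ub _ _)) //.
  by rewrite ler_wpM2l ?opnorm_ge0 ?vnormD.
by rewrite mulrAC ler_pdivlMr ?subr_gt0 //; nra.
Qed.

(* Duality bound: a linear functional u is controlled through any invertible
   change of variables M, since u = M^-T (M^T u). *)
Lemma dot_le_dual k (M : 'M[R]_k) (u y : 'cV[R]_k) : M \in unitmx ->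
  `|dot u y| <= opnorm (invmx M) * vnorm (M^T *m u) * vnorm y.
Proof.
move=> Mu; apply: (le_trans (dot_le_vnorm u y)); rewrite ler_wpM2r ?vnorm_ge0 //.
have u_sq : vnorm u ^+ 2 <= opnorm (invmx M) * vnorm u * vnorm (M^T *m u).
  have MT_inv : (invmx M)^T *m M^T = 1%:M by rewrite -trmx_mul mulmxV // trmx1.
  rewrite vnorm_sq -{2}[u]mul1mx -MT_inv -mulmxA dot_mulmx trmxK.
  rewrite (le_trans (ler_norm _)) // (le_trans (dot_le_vnorm _ _)) //.
  by rewrite ler_wpM2r ?vnorm_ge0 // opnorm_ub.
have [u0|un0] := eqVneq (vnorm u) 0.
  by rewrite u0 mulr_ge0 ?opnorm_ge0 ?vnorm_ge0.
by move: u_sq; rewrite expr2 mulrAC ler_pM2r // lt0r un0 vnorm_ge0.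
Qed.

End PerturbationBounds.

(* Abstract setting of the deterministic bound: S and Sh play Sigma_n and
   Sigma_hat, V the covariance V_n, B and C symmetric square roots of S and V,
   Gh = Gamma_hat, Z the score at beta, and psi = S^-1 Z. *)
Section DeterministicBound.
Variable R : realType.
Variable n : nat.
Variables (S Sh V B C : 'M[R]_n.+1) (Gh Z beta psi : 'cV[R]_n.+1).
Hypotheses (BT : B^T = B) (CT : C^T = C) (BB : B *m B = S) (CC : C *m C = V).
Hypotheses (Su : S \in unitmx) (Vu : V \in unitmx).
Hypotheses (Z_def : Z = Gh - Sh *m beta) (psi_def : psi = invmx S *m Z).

Let Bu : B \in unitmx.
Proof. by move: Su; rewrite -BB unitmx_mul => /andP[]. Qed.

Let Cu : C \in unitmx.
Proof. by move: Vu; rewrite -CC unitmx_mul => /andP[]. Qed.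

Let A := invmx B *m Sh *m invmx B.
Let D := opnorm (A - 1%:M).

(* In standardised coordinates the linearisation error y := B (beta_hat - beta - psi)
   satisfies A (y + g) = g with g := B psi: both sides equal B^-1 Z. *)
Lemma linearisation_fixed_point : Sh \in unitmx ->
  A *m (B *m (invmx Sh *m Gh - beta - psi) + B *m psi) = B *m psi.
Proof.
move=> Shu; rewrite -mulmxDr subrK.
have -> : invmx Sh *m Gh - beta = invmx Sh *m Z by rewrite Z_def mulmxBr mulKmx.
rewrite psi_def -BB invmxM // /A !mulmxA mulmxKV // mulmxK // mulmxV //.
by rewrite mul1mx.
Qed.

Let M := invmx B *m C.

Lemma std_error_eq (j : 'I_n.+1) :
  Num.sqrt ((invmx S *m V *m invmx S) j j) = vnorm (M^T *m (invmx B *m delta_mx j 0)).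
Proof.
have BiT : (invmx B)^T = invmx B by rewrite trmx_inv BT.
rewrite vnormE -BB -CC invmxM // diag_entry_dot.
by rewrite /dot /M !trmx_mul !trmxK BiT CT !mulmxA.
Qed.

Lemma weighted_norm_eq :
  wnorm (S *m invmx V *m S) psi = vnorm (invmx M *m (B *m psi)).
Proof.
have CiT : (invmx C)^T = invmx C by rewrite trmx_inv CT.
have Mi_eq : invmx M = invmx C *m B by rewrite invmxM ?unitmx_inv // invmxK.
rewrite /wnorm vnormE Mi_eq -BB -CC invmxM // /dot.
by rewrite !trmx_mul BT CiT !mulmxA.
Qed.

Lemma studentised_linearisation_bound (j : 'I_n.+1) : D < 1 ->
  `| (invmx Sh *m Gh - beta - psi) j 0 / Num.sqrt ((invmx S *m V *m invmx S) j j) |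
   <= kappa M * (D / (1 - D)) * wnorm (S *m invmx V *m S) psi.
Proof.
move=> D_lt1; have D_ge0 : 0 <= D := opnorm_ge0 _.
have q_ge0 : 0 <= D / (1 - D) by rewrite divr_ge0 // subr_ge0 ltW.
have Au : A \in unitmx := near_identity_unit D_lt1.
have Shu : Sh \in unitmx by move: Au; rewrite !unitmx_mul => /andP[/andP[]].
have Mu : M \in unitmx by rewrite unitmx_mul unitmx_inv Bu Cu.
set e := _ - psi; set g := B *m psi; set y := B *m e.
have y_le : vnorm y <= D / (1 - D) * vnorm g.
  exact: near_identity_fixed_point D_lt1 (linearisation_fixed_point Shu).
have g_le : vnorm g <= opnorm M * vnorm (invmx M *m g).
  by rewrite -{1}[g](mulKVmx Mu) opnorm_ub.
have e_j : e j 0 = dot (invmx B *m delta_mx j 0) y.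
  by rewrite -dot_delta -{1}[e](mulKmx Bu) dot_mulmx trmx_inv BT.
rewrite std_error_eq weighted_norm_eq e_j /kappa.
set den := vnorm _; have [den0|den_n0] := eqVneq den 0.
  by rewrite den0 invr0 mulr0 normr0 mulr_ge0 ?vnorm_ge0 // mulr_ge0 // mulr_ge0 ?opnorm_ge0.
have den_gt0 : 0 < den by rewrite lt0r den_n0 vnorm_ge0.
rewrite normrM normfV (ger0_norm (ltW den_gt0)) ler_pdivrMr //.
apply: (le_trans (dot_le_dual _ _ Mu)); rewrite -/den.
apply: (le_trans (ler_wpM2l (mulr_ge0 (opnorm_ge0 _) (ltW den_gt0))
  (le_trans y_le (ler_wpM2l q_ge0 g_le)))).
by rewrite le_eqVlt; apply/orP; left; apply/eqP; ring.
Qed.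

End DeterministicBound.

Section CovarianceMatrix.
Context (R : realType) (dsp : measure_display) (T : measurableType dsp)
  (P : probability T R).

Lemma square_integrable_Lfun2 (f : T -> R) : measurable_fun setT f ->
  P.-integrable setT (fun w => ((f w) ^+ 2)%:E) -> f \in Lfun P 2%:E.
Proof.
move=> mf /integrableP [_ f2_fin].
rewrite inE; apply/andP; split; first by rewrite inE /=.
rewrite inE /= /finite_norm unlock /Lnorm poweR_lty //.
apply: le_lt_trans f2_fin; rewrite le_eqVlt; apply/orP; left; apply/eqP.
by apply: eq_integral => w _ /=; rewrite powR_mulrn ?normr_ge0 // normrX.
Qed.

Lemma covariance_lincomb (I : Type) (s : seq I) (c : I -> R) (F : I -> T -> R)
    (G : T -> R) :
  (forall i, F i \in Lfun P 2%:E) -> G \in Lfun P 2%:E ->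
  (fun w => \sum_(i <- s) F i w * c i) \in Lfun P 2%:E /\
  covariance P (fun w => \sum_(i <- s) F i w * c i) G
    = (\sum_(i <- s) c i * fine (covariance P (F i) G))%:E.
Proof.
move=> F2 G2; elim: s => [|a s [IH2 IHcov]].
  have -> : (fun w => \sum_(i <- [::]) F i w * c i) = cst 0.
    by apply/funext => w; rewrite big_nil.
  by rewrite big_nil covariance_cst_l; split => //; exact: Lfun_cst.
have -> : (fun w => \sum_(i <- a :: s) F i w * c i) =
    ((c a \o* F a) \+ (fun w => \sum_(i <- s) F i w * c i))%R.
  by apply/funext => w; rewrite big_cons.
have Fa2 : (c a \o* F a)%R \in Lfun P 2%:E.
  by apply: (@Lfun_scale _ _ _ _ _ _ 2); [lra | exact: F2].
have L1 f : f \in Lfun P 2%:E -> f \in Lfun P 1.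
  by apply: Lfun_subset12; exact: fin_num_measure.
have Fa1 := L1 _ (F2 a); have G1 := L1 _ G2.
have FaG : (F a * G)%R \in Lfun P 1 by exact: Lfun2_mul_Lfun1.
split; first by rewrite rpredD ?lee1n.
rewrite covarianceDl // IHcov covarianceZl //.
have cov_fin : covariance P (F a) G \is a fin_num by rewrite covariance_fin_num.
by rewrite -(fineK cov_fin) big_cons -EFinM -EFinD.
Qed.

(* A covariance matrix is positive semidefinite: x^T Cov x = Var(sum_k x_k Z_k). *)
Lemma covariance_matrix_psd k (Zf : 'I_k -> T -> R) :
  (forall a, Zf a \in Lfun P 2%:E) ->
  psdmx (\matrix_(a, b) fine (covariance P (Zf a) (Zf b))).
Proof.
move=> Z2; split=> [|x]; first by apply/matrixP => a b; rewrite !mxE covarianceC.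
pose W w := \sum_(a <- index_enum 'I_k) Zf a w * x a 0.
have lin G := @covariance_lincomb _ (index_enum 'I_k) (fun a => x a 0) Zf G Z2.
have W2 : W \in Lfun P 2%:E by have [] := lin (cst 0) (Lfun_cst _ _ _).
have cov_ZW a : fine (covariance P (Zf a) W) =
    \sum_(b <- index_enum 'I_k) x b 0 * fine (covariance P (Zf b) (Zf a)).
  by rewrite covarianceC (lin (Zf a) (Z2 a)).2.
have := variance_ge0 P W; rewrite /variance (lin W W2).2 lee_fin.
under eq_bigr do rewrite cov_ZW.
move/le_trans; apply; rewrite le_eqVlt; apply/orP; left; apply/eqP.
rewrite mxE; under [RHS]eq_bigr do rewrite mxE mulr_suml.
rewrite exchange_big /=; apply: eq_bigr => a _; rewrite mulr_sumr.
by apply: eq_bigr => b _; rewrite !mxE covarianceC; ring.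
Qed.

End CovarianceMatrix.

Section LeastSquares.
Context (R : realType) (dsp : measure_display) (T : measurableType dsp)
  (P : probability T R).
Variables (n d : nat) (X : 'I_n -> T -> 'cV[R]_d) (Y : 'I_n -> T -> R).
Hypotheses (mX : forall i k, measurable_fun setT (fun w => X i w k 0))
  (mY : forall i, measurable_fun setT (Y i)).

Lemma Zvec_eq w : Zvec P X Y w = Gamma_hat X Y w - Sigma_hat X w *m beta_n P X Y.
Proof.
rewrite /Zvec /Gamma_hat /Sigma_hat -scalemxAl -scalerBr mulmx_suml -sumrB.
congr (_ *: _); apply: eq_bigr => i _; rewrite scalerBl; congr (_ - _).
by rewrite -mul_mx_scalar -mx11_scalar mulmxA.
Qed.

Lemma psi_bar_eq w : psi_bar P X Y w = invmx (Sigma_n P X) *m Zvec P X Y w.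
Proof. by rewrite /psi_bar /psi /Zvec -scalemxAr mulmx_sumr. Qed.

Lemma Zvec_measurable k : measurable_fun setT (fun w => Zvec P X Y w k 0).
Proof.
have -> : (fun w => Zvec P X Y w k 0) = (fun w =>
    n%:R^-1 * \sum_i ((Y i w - \sum_l X i w l 0 * beta_n P X Y l 0) * X i w k 0)).
  apply/funext => w; rewrite /Zvec mxE summxE; congr (_ * _).
  apply: eq_bigr => i _; rewrite !mxE; congr ((_ - _) * _).
  by apply: eq_bigr => l _; rewrite mxE.
apply: measurable_funM; first exact: measurable_cst.
apply: measurable_sum => i; apply: measurable_funM => //.
apply: measurable_funB => //; apply: measurable_sum => l.
by apply: measurable_funM => //; exact: measurable_cst.
Qed.

Lemma V_n_psd : (forall k, P.-integrable setT (fun w => ((Zvec P X Y w k 0) ^+ 2)%:E)) ->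
  psdmx (V_n P X Y).
Proof.
move=> Z2; apply: covariance_matrix_psd => k.
exact: square_integrable_Lfun2 (Zvec_measurable k) (Z2 k).
Qed.

End LeastSquares.

Theorem mainTheorem2 (R : realType) (dsp : measure_display)
  (T : measurableType dsp) (P : probability T R) (n d : nat)
  (X : 'I_n -> T -> 'cV[R]_d) (Y : 'I_n -> T -> R)
  (mX : forall i k, measurable_fun setT (fun w => X i w k 0))
  (mY : forall i, measurable_fun setT (Y i))
  (X2 : forall i k, P.-integrable setT (fun w => ((X i w k 0) ^+ 2)%:E))
  (Y2 : forall i, P.-integrable setT (fun w => ((Y i w) ^+ 2)%:E))
  (Z2 : forall k, P.-integrable setT
          (fun w => ((Zvec P X Y w k 0) ^+ 2)%:E))
  (hS : Sigma_n P X \in unitmx) (hV : V_n P X Y \in unitmx)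
  (w : T) (hD : DSigma P X w < 1) :
  forall j : 'I_d,
    `| (beta_hat X Y w j 0 - beta_n P X Y j 0 - psi_bar P X Y w j 0)
        / Num.sqrt ((invmx (Sigma_n P X) *m V_n P X Y *m invmx (Sigma_n P X)) j j) |
    <= kappa (invmx (sqrtmx (Sigma_n P X)) *m sqrtmx (V_n P X Y))
       * (DSigma P X w / (1 - DSigma P X w))
       * wnorm (Sigma_n P X *m invmx (V_n P X Y) *m Sigma_n P X) (psi_bar P X Y w).
Proof.
move=> j; move: X mX X2 Z2 hS hV hD j.
case: d => [|k] X mX _ Z2 hS hV hD j; first by case: j.
have [[CT _] CC] := sqrtmxP (psd_sqrt_exists (V_n_psd mX mY Z2)).
have [[BT _] BB] := sqrtmxP (standardisable_sqrt_exists hD).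
have -> : beta_hat X Y w j 0 - beta_n P X Y j 0 - psi_bar P X Y w j 0
    = (beta_hat X Y w - beta_n P X Y - psi_bar P X Y w) j 0 by rewrite !mxE.
exact: studentised_linearisation_bound BT CT BB CC hS hV
  (Zvec_eq P X Y w) (psi_bar_eq P X Y w) j hD.
Qed.
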